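(* Let $\mathbf{X},\mathbf{Y},\mathbf{Z}$ be finite non-empty sets and let $P$ be a positive probability measure on $\mathbf{X}\times\mathbf{Y}\times\mathbf{Z}$, i.e. $P(x,y,z)>0$ for all $(x,y,z)$. Let $(X_n,Y_n,Z_n)$, $n=1,\dots,N$, be independent random elements of $\mathbf{X}\times\mathbf{Y}\times\mathbf{Z}$, each distributed according to $P$, where $N\ge1$ is fixed. Fix $\delta>0$, $\tilde x\in\mathbf{X}$ and $y\in\mathbf{Y}$, and define the parameter \[ P(y\mid\mathrm{do}(\tilde x)):=\sum_{z\in\mathbf{Z}}P(Y=y\mid X=\tilde x,Z=z)\,P(Z=z). \] Let $m:=\sum_{z\in\mathbf{Z}}\hat p(y\mid\tilde x,z)\,\hat p(z)$ and \[ h:=|\mathbf{Z}|\sqrt{\frac{\ln\frac{4|\mathbf{Z}|}{\delta}}{2N}}+\sum_{z\in\mathbf{Z}}\sqrt{\frac{\ln\frac{4|\mathbf{Z}|}{\delta}}{2\,\#\tilde x z}}, \] where $h:=\infty$ if $\#\tilde x z=0$ for some $z$. Then $[m-h,m+h]$ is a $(1-\delta)$-confidence interval for $P(y\mid\mathrm{do}(\tilde x))$, i.e. $\mathbb{P}\bigl(P(y\mid\mathrm{do}(\tilde x))\in[m-h,m+h]\bigr)\ge1-\delta$.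
   Context: Counting notation: for values $x,y,z$, $\#z:=|\{n\in[N]:Z_n=z\}|$, $\#\tilde x z:=|\{n\in[N]:(X_n,Z_n)=(\tilde x,z)\}|$, $\#\tilde x yz:=|\{n\in[N]:(X_n,Y_n,Z_n)=(\tilde x,y,z)\}|$. The estimates are $\hat p(z):=\#z/N$ and $\hat p(y\mid\tilde x,z):=\#\tilde x y z/\#\tilde x z$. Here $X$, $Y$, $Z$ may each be tuples of variables of a causal dag (e.g. $Z=(Z^1,\dots,Z^k)$ with $\mathbf{Z}=\mathbf{Z}^1\times\dots\times\mathbf{Z}^k$, so $|\mathbf{Z}|=|\mathbf{Z}^1|\cdots|\mathbf{Z}^k|$); the parameter is the causal effect of $X$ on $Y$ when $Z$ satisfies Pearl's back-door criterion relative to $(X,Y)$, but the claim concerns only the displayed quantity. *)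

From HB Require Import structures.
From mathcomp Require Import all_boot all_order all_algebra.
From mathcomp Require Import reals exp.
Set Implicit Arguments. Unset Strict Implicit. Unset Printing Implicit Defensive.
Import Order.TTheory GRing.Theory Num.Theory.
Local Open Scope ring_scope.

Section BackdoorCI.
Variables (R : realType) (X Y Z : finType).

Definition point := (X * Y * Z)%type.

Definition PZ (P : point -> R) (z : Z) : R := \sum_(x : X) \sum_(y : Y) P (x, y, z).
Definition PXZ (P : point -> R) (x : X) (z : Z) : R := \sum_(y : Y) P (x, y, z).
Definition cond_y_xz (P : point -> R) (y : Y) (x : X) (z : Z) : R :=
  P (x, y, z) / PXZ P x z.
Definition do_param (P : point -> R) (xt : X) (y : Y) : R :=
  \sum_(z : Z) cond_y_xz P y xt z * PZ P z.

Definition sample N := {ffun 'I_N -> point}.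

Definition sample_prob (P : point -> R) N (s : sample N) : R :=
  \prod_(n < N) P (s n).
Definition Prob (P : point -> R) N (E : pred (sample N)) : R :=
  \sum_(s : sample N | E s) sample_prob P s.

Definition cnt_z N (s : sample N) (z : Z) : nat :=
  #|[set n : 'I_N | (s n).2 == z]|.
Definition cnt_xz N (s : sample N) (x : X) (z : Z) : nat :=
  #|[set n : 'I_N | ((s n).1.1 == x) && ((s n).2 == z)]|.
Definition cnt_xyz N (s : sample N) (x : X) (y : Y) (z : Z) : nat :=
  #|[set n : 'I_N | [&& (s n).1.1 == x, (s n).1.2 == y & (s n).2 == z]]|.

Definition phat_z N (s : sample N) (z : Z) : R := (cnt_z s z)%:R / N%:R.
Definition phat_y_xz N (s : sample N) (y : Y) (x : X) (z : Z) : R :=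
  (cnt_xyz s x y z)%:R / (cnt_xz s x z)%:R.
Definition mhat N (s : sample N) (xt : X) (y : Y) : R :=
  \sum_(z : Z) phat_y_xz s y xt z * phat_z s z.

(* the half-width h (meaningful when every count #x~z is positive;
   otherwise h = +oo, handled in [in_CI]) *)
Definition hwidth N (s : sample N) (xt : X) (delta : R) : R :=
  let L := ln (4 * #|Z|%:R / delta) in
  #|Z|%:R * Num.sqrt (L / (2 * N%:R))
  + \sum_(z : Z) Num.sqrt (L / (2 * (cnt_xz s xt z)%:R)).

(* the event P(y | do(x~)) \in [m - h, m + h]; always true when h = +oo *)
Definition in_CI (P : point -> R) N (xt : X) (y : Y) (delta : R) (s : sample N) : bool :=
  [forall z : Z, (0 < cnt_xz s xt z)%N] ==>
  (mhat s xt y - hwidth s xt delta <= do_param P xt y <= mhat s xt y + hwidth s xt delta).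

End BackdoorCI.

From mathcomp Require Import all_boot all_order all_algebra.
From mathcomp Require Import reals exp.
From mathcomp Require Import classical_sets topology normedtype sequences.
From mathcomp Require Import derive realfun.
From mathcomp Require Import ring lra.
Import Order.TTheory GRing.Theory Num.Theory numFieldNormedType.Exports.
Local Open Scope ring_scope.
Set Implicit Arguments. Unset Strict Implicit. Unset Printing Implicit Defensive.

(* Since m - P(y | do(x~)) = sum_z (phat(y|x~,z) - p(y|x~,z)) phat(z)
   + sum_z p(y|x~,z) (phat(z) - p(z)) with all factors in [0, 1], the interval
   can only fail if phat(z) or phat(y|x~,z) misses its probability by more than
   the corresponding summand of h.  For phat(z) this is Hoeffding's inequality.
   For phat(y|x~,z) condition on the set of indices n with (X_n, Z_n) = (x~, z):
   given that set, the indicators of Y_n = y on it are i.i.d. Bernoulli, so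
   Hoeffding's inequality holds with #x~z in place of N.  Both are proved by the
   Chernoff method from Hoeffding's lemma E exp(mu (B - q)) <= exp(mu^2 / 8).
   Each of the 4|Z| one-sided deviations then has probability at most
   exp(- ln (4|Z| / delta)) = delta / (4|Z|), and a union bound concludes. *)

Lemma MVT_from0 (R : realType) (f df : R -> R) (m : R) :
  (forall x : R, is_derive x 1 f (df x)) ->
  exists2 c, 0 <= c * m & f m - f 0 = df c * m.
Proof.
move=> f_df; have f_cont (A : set R) : {within A, continuous f}%classic.
  apply: continuous_subspaceT => x.
  by apply/differentiable_continuous/derivable1_diffP; case: (f_df x).
have [m_ge0|m_lt0] := leP 0 m.
  have [c /andP[c_ge0 _] ->] := MVT_segment m_ge0 (fun x _ => f_df x) (f_cont _).
  by exists c; rewrite ?subr0 // mulr_ge0.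
have [c /andP[_ c_le0] fE] := MVT_segment (ltW m_lt0) (fun x _ => f_df x) (f_cont _).
exists c; first by rewrite mulr_le0 // ltW.
by rewrite -opprB fE sub0r mulrN opprK.
Qed.

Section HoeffdingLemma.
Variables (R : realType) (r : R).
Hypotheses (r_ge0 : 0 <= r) (r_le1 : r <= 1).

Definition bernoulli_mgf (m : R) : R := 1 - r + r * expR m.

(* [m^2 / 8 - ln E exp (m (B - r))] for [B] a Bernoulli variable of mean [r]. *)
Definition hoeffding_gap (m : R) : R := m * m / 8 + r * m - ln (bernoulli_mgf m).
Definition hoeffding_gap' (m : R) : R := m / 4 + r - r * expR m / bernoulli_mgf m.
Definition hoeffding_gap'' (m : R) : R :=
  4^-1 - r * (1 - r) * expR m / bernoulli_mgf m ^+ 2.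

Lemma bernoulli_mgf_gt0 m : 0 < bernoulli_mgf m.
Proof.
rewrite /bernoulli_mgf; have e_gt0 := expR_gt0 m.
have [->|r_neq0] := eqVneq r 0; first by rewrite subr0 mul0r addr0.
have r_gt0 : 0 < r by rewrite lt_def r_neq0.
by have := mulr_gt0 r_gt0 e_gt0; move: r_le1; lra.
Qed.

Lemma hoeffding_gap''_ge0 m : 0 <= hoeffding_gap'' m.
Proof.
have M_gt0 := bernoulli_mgf_gt0 m.
have -> : hoeffding_gap'' m =
    ((1 - r) - r * expR m) ^+ 2 / (4 * bernoulli_mgf m ^+ 2).
  move: M_gt0; rewrite /hoeffding_gap'' /bernoulli_mgf => M_gt0.
  by field; exact: lt0r_neq0.
by apply: divr_ge0; [|apply: mulr_ge0]; rewrite ?sqr_ge0.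
Qed.

Lemma is_derive_bernoulli_mgf (m : R) : is_derive m 1 bernoulli_mgf (r * expR m).
Proof. by apply: is_derive_eq; rewrite add0r mul1r. Qed.

Lemma is_derive_hoeffding_gap (m : R) :
  is_derive m 1 hoeffding_gap (hoeffding_gap' m).
Proof.
have := is_derive1_comp (is_derive1_ln (bernoulli_mgf_gt0 m))
  (is_derive_bernoulli_mgf m).
rewrite mulrC => d_ln; apply: is_derive_eq.
rewrite /hoeffding_gap' /GRing.scale /=.
by field; exact/lt0r_neq0/bernoulli_mgf_gt0.
Qed.

Lemma is_derive_hoeffding_gap' (m : R) :
  is_derive m 1 hoeffding_gap' (hoeffding_gap'' m).
Proof.
have := is_deriveV (lt0r_neq0 (bernoulli_mgf_gt0 m)) (is_derive_bernoulli_mgf m).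
move=> d_inv; apply: is_derive_eq.
have := bernoulli_mgf_gt0 m.
rewrite /hoeffding_gap'' /bernoulli_mgf /GRing.scale /= => M_gt0.
by field; exact: lt0r_neq0.
Qed.

Lemma hoeffding_gap_ge0 m : 0 <= hoeffding_gap m.
Proof.
have M0 : bernoulli_mgf 0 = 1 by rewrite /bernoulli_mgf expR0 mulr1 subrK.
have gap0 : hoeffding_gap 0 = 0.
  by rewrite /hoeffding_gap M0 ln1 !(mulr0, mul0r) !(addr0, subr0).
have gap'0 : hoeffding_gap' 0 = 0.
  by rewrite /hoeffding_gap' M0 expR0 mul0r add0r mulr1 divr1 subrr.
have [c cm_ge0 gapE] := MVT_from0 m is_derive_hoeffding_gap.
have [c' _ gap'E] := MVT_from0 c is_derive_hoeffding_gap'.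
rewrite gap0 subr0 in gapE; rewrite gap'0 subr0 in gap'E.
by rewrite gapE gap'E -mulrA mulr_ge0 ?hoeffding_gap''_ge0.
Qed.

Lemma hoeffding_lemma (m : R) :
  r * expR (m * (1 - r)) + (1 - r) * expR (- (m * r)) <= expR (m * m / 8).
Proof.
have := hoeffding_gap_ge0 m; rewrite /hoeffding_gap subr_ge0 => ln_le.
have M_le : bernoulli_mgf m <= expR (m * m / 8 + r * m).
  by rewrite -[bernoulli_mgf m]lnK ?ler_expR // posrE bernoulli_mgf_gt0.
have -> : r * expR (m * (1 - r)) + (1 - r) * expR (- (m * r)) =
    expR (- (m * r)) * bernoulli_mgf m.
  by rewrite /bernoulli_mgf mulrBr mulr1 expRD; ring.
have -> : expR (m * m / 8) = expR (- (m * r)) * expR (m * m / 8 + r * m).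
  by rewrite -expRD; congr expR; ring.
by rewrite ler_pM2l ?expR_gt0.
Qed.

End HoeffdingLemma.

Section IidSamples.
Variables (R : realType) (X Y Z : finType) (P : X * Y * Z -> R) (N : nat).
Hypothesis P_ge0 : forall t, 0 <= P t.

Lemma sample_prob_ge0 (s : sample X Y Z N) : 0 <= sample_prob P s.
Proof. by apply: prodr_ge0 => n _; exact: P_ge0. Qed.

Lemma Prob_ge0 (E : pred (sample X Y Z N)) : 0 <= Prob P E.
Proof. by apply: sumr_ge0 => s _; exact: sample_prob_ge0. Qed.

Lemma le_Prob (E F : pred (sample X Y Z N)) :
  (forall s, E s -> F s) -> Prob P E <= Prob P F.
Proof.
move=> EF; rewrite /Prob [leLHS]big_mkcond [leRHS]big_mkcond /=.
apply: ler_sum => s _; case: ifP => Es; first by rewrite (EF _ Es).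
by case: ifP => // _; exact: sample_prob_ge0.
Qed.

Lemma Prob_or (E F : pred (sample X Y Z N)) :
  Prob P (fun s => E s || F s) <= Prob P E + Prob P F.
Proof.
rewrite /Prob [leLHS]big_mkcond [in leRHS]big_mkcond [e in _ <= _ + e]big_mkcond.
rewrite -big_split /=; apply: ler_sum => s _; have := sample_prob_ge0 s.
by case: (E s); case: (F s); rewrite /= ?addr0 ?add0r; lra.
Qed.

Lemma Prob_exists (I : finType) (E : I -> pred (sample X Y Z N)) :
  Prob P (fun s => [exists i, E i s]) <= \sum_i Prob P (E i).
Proof.
rewrite /Prob (eq_bigr (fun i => \sum_s (E i s)%:R * sample_prob P s)); last first.
  move=> i _; rewrite big_mkcond; apply: eq_bigr => s _.
  by case: (E i s); rewrite ?mul1r ?mul0r.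
rewrite exchange_big /= big_mkcond /=; apply: ler_sum => s _.
have w_ge0 j : 0 <= (E j s)%:R * sample_prob P s by rewrite mulr_ge0 ?sample_prob_ge0.
case: ifP => [/existsP[i Ei]|_]; last exact: sumr_ge0.
by rewrite (bigD1 i) //= Ei mul1r lerDl sumr_ge0.
Qed.

Lemma sum_sample_prob_prod (G : 'I_N -> X * Y * Z -> R) :
  \sum_(s : sample X Y Z N) sample_prob P s * \prod_n G n (s n) =
  \prod_n \sum_t P t * G n t.
Proof.
rewrite bigA_distr_bigA /=; apply: eq_bigr => s _.
by rewrite /sample_prob -big_split.
Qed.

Lemma Prob_predC (E : pred (sample X Y Z N)) :
  \sum_t P t = 1 -> Prob P (predC E) = 1 - Prob P E.
Proof.
move=> P_sum1; have total : \sum_(s : sample X Y Z N) sample_prob P s = 1.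
  rewrite /sample_prob -(bigA_distr_bigA (fun _ t => P t)) /= P_sum1.
  by rewrite prodr_const expr1n.
by rewrite -total /Prob [in RHS](bigID E) /= addrAC subrr add0r.
Qed.

End IidSamples.

Section Frequencies.
Variables (R : realType) (X Y Z : finType) (N : nat).
Implicit Types (P : X * Y * Z -> R) (A B : pred (X * Y * Z)) (s : sample X Y Z N).

Definition count_in A s : nat := #|[set n | A (s n)]|.

(* Junk value [0] when no sample point lies in [A]. *)
Definition freq_cond A B s : R :=
  (count_in (fun t => A t && B t) s)%:R / (count_in A s)%:R.

Definition prob_cond P A B : R := (\sum_(t | A t && B t) P t) / \sum_(t | A t) P t.

Definition hoeffding_radius (L : R) (k : nat) : R := Num.sqrt (L / (2 * k%:R)).

(* [sg = 1] and [sg = -1] select the upper and the lower tail. *)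
Definition freq_excess P (L sg : R) A B s : bool :=
  (0 < count_in A s)%N &&
  (hoeffding_radius L (count_in A s) < sg * (freq_cond A B s - prob_cond P A B)).

Definition freq_dev P (L : R) A B s : bool :=
  (0 < count_in A s)%N &&
  (hoeffding_radius L (count_in A s) < `|freq_cond A B s - prob_cond P A B|).

Lemma freq_dev_excess P L A B s :
  freq_dev P L A B s -> freq_excess P L 1 A B s || freq_excess P L (-1) A B s.
Proof.
by rewrite /freq_dev /freq_excess mul1r mulN1r ltr_normr -andb_orr.
Qed.

Lemma dist_freq_cond_le P L A B s :
  (0 < count_in A s)%N -> ~~ freq_dev P L A B s ->
  `|freq_cond A B s - prob_cond P A B| <= hoeffding_radius L (count_in A s).
Proof. by rewrite /freq_dev leNgt => ->. Qed.

Lemma freq_cond_ge0 A B s : 0 <= freq_cond A B s.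
Proof. by rewrite divr_ge0. Qed.

Lemma freq_cond_le1 A B s : freq_cond A B s <= 1.
Proof.
rewrite /freq_cond; have [->|cnt_gt0] := posnP (count_in A s).
  by rewrite invr0 mulr0.
rewrite ler_pdivrMr ?ltr0n // mul1r ler_nat.
rewrite /count_in; apply/subset_leq_card/fintype.subsetP => n.
by rewrite !inE => /andP[].
Qed.

Lemma prob_cond_ge0 P A B : (forall t, 0 <= P t) -> 0 <= prob_cond P A B.
Proof. by move=> P_ge0; rewrite divr_ge0 ?sumr_ge0. Qed.

Lemma prob_cond_le1 P A B : (forall t, 0 <= P t) -> prob_cond P A B <= 1.
Proof.
move=> P_ge0; rewrite /prob_cond.
have [->|a_neq0] := eqVneq (\sum_(t | A t) P t) 0; first by rewrite invr0 mulr0.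
have a_gt0 : 0 < \sum_(t | A t) P t by rewrite lt_def a_neq0 sumr_ge0.
rewrite ler_pdivrMr // mul1r [leRHS](bigID B) /= lerDl.
exact: sumr_ge0.
Qed.

End Frequencies.

Section CondHoeffding.
Variables (R : realType) (X Y Z : finType) (P : X * Y * Z -> R) (N : nat).
Hypothesis P_ge0 : forall t, 0 <= P t.
Hypothesis P_sum1 : \sum_t P t = 1.
Variables (A B : pred (X * Y * Z)).
Let a := \sum_(t | A t) P t.
Let c := \sum_(t | ~~ A t) P t.
Let q := prob_cond P A B.
Hypothesis a_gt0 : 0 < a.

Lemma cond_mgf_le (mu : R) :
  \sum_(t | A t) P t * expR (mu * ((B t)%:R - q)) <= a * expR (mu * mu / 8).
Proof.
have qa : \sum_(t | A t && B t) P t = q * a by rewrite /q /prob_cond divfK ?lt0r_neq0.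
have qa' : \sum_(t | A t && ~~ B t) P t = (1 - q) * a.
  by rewrite mulrBl mul1r -qa /a [in RHS](bigID B) /= addrAC subrr add0r.
rewrite (bigID B) /= (eq_bigr (fun t => P t * expR (mu * (1 - q)))); last first.
  by move=> t /andP[_ ->].
rewrite [in e in _ + e](eq_bigr (fun t => P t * expR (- (mu * q)))); last first.
  by move=> t /andP[_ /negbTE ->]; rewrite sub0r mulrN.
have q_ge0 : 0 <= q := prob_cond_ge0 A B P_ge0.
have q_le1 : q <= 1 := prob_cond_le1 A B P_ge0.
rewrite -!big_distrl /= qa qa'.
have -> : q * a * expR (mu * (1 - q)) + (1 - q) * a * expR (- (mu * q)) =
    a * (q * expR (mu * (1 - q)) + (1 - q) * expR (- (mu * q))) by ring.
by rewrite ler_pM2l // hoeffding_lemma.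
Qed.

Definition pattern (s : sample X Y Z N) : {ffun 'I_N -> bool} := [ffun n => A (s n)].

(* Integrated against [P^N], the product over [n] of [tilt b mu n] keeps only
   the samples of pattern [b] and weighs them by exp (mu (#(A & B) - q #A)). *)
Definition tilt (b : {ffun 'I_N -> bool}) (mu : R) (n : 'I_N) (t : X * Y * Z) : R :=
  if b n then (A t)%:R * expR (mu * ((B t)%:R - q)) else (~~ A t)%:R.

Lemma tilt_ge0 b mu n t : 0 <= tilt b mu n t.
Proof. by rewrite /tilt; case: (b n); rewrite ?mulr_ge0 ?expR_ge0. Qed.

Lemma sum_tilt_le b mu n :
  \sum_t P t * tilt b mu n t <= if b n then a * expR (mu * mu / 8) else c.
Proof.
rewrite /tilt; case: (b n).
  apply: le_trans (cond_mgf_le mu); rewrite [leRHS]big_mkcond /=.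
  by apply/ler_sum => t _; case: (A t); rewrite ?mul1r ?mul0r ?mulr0.
rewrite /c [leRHS]big_mkcond /=.
by apply/ler_sum => t _; case: (A t); rewrite ?mulr1 ?mulr0.
Qed.

Lemma natr_count_in (C : pred (X * Y * Z)) (s : sample X Y Z N) :
  (count_in C s)%:R = \sum_(n | C (s n)) 1 :> R.
Proof. by rewrite /count_in -sum1dep_card natr_sum. Qed.

Lemma prod_tilt_pattern mu s :
  \prod_n tilt (pattern s) mu n (s n) =
  expR (mu * ((count_in (fun t => A t && B t) s)%:R - q * (count_in A s)%:R)).
Proof.
transitivity (\prod_(n | A (s n)) expR (mu * ((B (s n))%:R - q))).
  rewrite [RHS]big_mkcond; apply: eq_bigr => n _.
  by rewrite /tilt ffunE; case: (A (s n)); [exact: mul1r|].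
have sumB : \sum_(n | A (s n)) (B (s n))%:R = \sum_(n | A (s n) && B (s n)) 1 :> R.
  by rewrite big_mkcondr /=; apply: eq_bigr => n _; case: (B (s n)).
have sumq : \sum_(n | A (s n)) q = q * \sum_(n | A (s n)) 1.
  by rewrite mulr_sumr; apply: eq_bigr => n _; rewrite mulr1.
by rewrite -expR_sum -mulr_sumr sumrB !natr_count_in sumB sumq.
Qed.

Lemma prod_if_scale (b : {ffun 'I_N -> bool}) (x : R) :
  \prod_n (if b n then a * x else c) =
  x ^+ #|[set n | b n]| * \prod_n (if b n then a else c).
Proof.
have -> : x ^+ #|[set n | b n]| = \prod_(n | b n) x.
  by rewrite -prodr_const; apply: eq_bigl => n; rewrite inE.
rewrite [e in _ = e * _]big_mkcond -big_split /=; apply: eq_bigr => n _.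
by case: (b n); rewrite ?mul1r // mulrC.
Qed.

Lemma excess_tilt_ge1 (L sg : R) (s : sample X Y Z N) (k : nat) :
  count_in A s = k -> freq_excess P L sg A B s ->
  1 <= \prod_n tilt (pattern s) (sg * (4 * hoeffding_radius L k)) n (s n) *
       expR (- (4 * k%:R * hoeffding_radius L k ^+ 2)).
Proof.
move=> cnt_k /andP[]; rewrite cnt_k => k_gt0 dev; set e := hoeffding_radius L k.
have k_neq0 : k%:R != 0 :> R by rewrite pnatr_eq0 -lt0n.
have e_ge0 : 0 <= e := sqrtr_ge0 _.
rewrite prod_tilt_pattern cnt_k -expRD.
apply: le_trans (expR_ge1Dx _); rewrite lerDl subr_ge0.
have -> : 4 * k%:R * e ^+ 2 = 4 * e * k%:R * e by ring.
have -> : sg * (4 * e) * ((count_in (fun t => A t && B t) s)%:R - q * k%:R) =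
    4 * e * k%:R * (sg * (freq_cond R A B s - q)) by rewrite /freq_cond cnt_k; field.
by rewrite ler_wpM2l ?mulr_ge0 // ltW.
Qed.

Lemma excess_pattern_le (L sg : R) (b : {ffun 'I_N -> bool}) :
  0 <= L -> sg * sg = 1 ->
  \sum_(s | freq_excess P L sg A B s && (pattern s == b)) sample_prob P s <=
  expR (- L) * \prod_n (if b n then a else c).
Proof.
move=> L_ge0 sg2; set k := #|[set n | b n]|.
have count_pattern s : pattern s = b -> count_in A s = k.
  by move=> sb; rewrite /k -sb; apply: eq_card => n; rewrite !inE ffunE.
have [k0|k_gt0] := posnP k.
  rewrite big1 ?mulr_ge0 ?expR_ge0 ?prodr_ge0 // => [n _|s].
    by case: (b n); [exact: ltW | exact: sumr_ge0].
  case/andP=> /andP[cnt_gt0 _] /eqP/count_pattern cnt_k.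
  by rewrite cnt_k k0 in cnt_gt0.
set e := hoeffding_radius L k; set mu := sg * (4 * e).
set E := expR (- (4 * k%:R * e ^+ 2)).
apply: (@le_trans _ _ (\sum_s sample_prob P s * \prod_n tilt b mu n (s n) * E)).
  rewrite [leRHS](bigID (fun s => freq_excess P L sg A B s && (pattern s == b))) /=.
  apply: ler_wpDr.
    apply: sumr_ge0 => s _; rewrite !mulr_ge0 ?expR_ge0 ?sample_prob_ge0 //.
    by apply: prodr_ge0 => n _; exact: tilt_ge0.
  apply: ler_sum => s /andP[dev /eqP sb]; rewrite -mulrA ler_peMr ?sample_prob_ge0 //.
  by rewrite -sb; exact: excess_tilt_ge1 (count_pattern _ sb) dev.
rewrite -big_distrl /= sum_sample_prob_prod.
apply: (@le_trans _ _ (\prod_n (if b n then a * expR (mu * mu / 8) else c) * E)).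
  rewrite ler_wpM2r ?expR_ge0 //; apply: ler_prod => n _.
  by rewrite sum_tilt_le andbT sumr_ge0 // => t _; rewrite mulr_ge0 ?tilt_ge0.
rewrite prod_if_scale -/k -expRM_natl mulrAC -expRD mulrC.
have -> : k%:R * (mu * mu / 8) - 4 * k%:R * e ^+ 2 = - L.
  have k_neq0 : k%:R != 0 :> R by rewrite pnatr_eq0 -lt0n.
  have -> : mu * mu = (sg * sg) * 16 * e ^+ 2 by rewrite /mu; ring.
  by rewrite sg2 sqr_sqrtr ?divr_ge0 ?mulr_ge0 //; field.
by rewrite mulrC.
Qed.

Lemma Prob_excess_le (L sg : R) :
  0 <= L -> sg * sg = 1 -> Prob P (freq_excess (N := N) P L sg A B) <= expR (- L).
Proof.
move=> L_ge0 sg2; rewrite /Prob (partition_big pattern predT) //=.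
apply: le_trans (ler_sum _ (fun b _ => excess_pattern_le b L_ge0 sg2)) _.
have ac1 : a + c = 1 by rewrite -P_sum1 [in RHS](bigID A).
rewrite -mulr_sumr -(bigA_distr_bigA (fun _ j => if j then a else c)) /=.
rewrite (eq_bigr (fun _ => 1)) => [|n _].
  by rewrite prodr_const expr1n mulr1.
by rewrite big_bool.
Qed.

Lemma Prob_freq_dev_le (L : R) :
  0 <= L -> Prob P (freq_dev (N := N) P L A B) <= 2 * expR (- L).
Proof.
move=> L_ge0; apply: le_trans (le_Prob P_ge0 (@freq_dev_excess _ _ _ _ _ P L A B)) _.
apply: le_trans (Prob_or P_ge0 _ _) _.
rewrite mulr_natl mulr2n; apply: lerD; apply: Prob_excess_le => //.
  by rewrite mulr1.
by rewrite mulrNN mulr1.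
Qed.
End CondHoeffding.

Lemma dist_sum_mul_le (R : realDomainType) (I : finType)
    (r q pi p ez : I -> R) (e : R) :
  (forall i, `|r i - q i| <= ez i) -> (forall i, `|pi i - p i| <= e) ->
  (forall i, 0 <= pi i <= 1) -> (forall i, 0 <= q i <= 1) ->
  `|\sum_i r i * pi i - \sum_i q i * p i| <= #|I|%:R * e + \sum_i ez i.
Proof.
move=> r_q pi_p pi01 q01.
rewrite -sumrB mulr_natl -sumr_const -big_split /=.
apply: le_trans (ler_norm_sum _ _ _) _; apply: ler_sum => i _.
have -> : r i * pi i - q i * p i = (r i - q i) * pi i + q i * (pi i - p i) by ring.
apply: le_trans (ler_normD _ _) _; rewrite addrC !normrM.
have /andP[pi_ge0 pi_le1] := pi01 i; have /andP[q_ge0 q_le1] := q01 i.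
rewrite (ger0_norm pi_ge0) (ger0_norm q_ge0).
by apply: lerD; [rewrite -[ez i]mulr1 | rewrite -[e]mul1r]; apply: ler_pM.
Qed.

Section Backdoor.
Variables (R : realType) (X Y Z : finType).
Implicit Types (P : X * Y * Z -> R) (x : X) (y : Y) (z : Z).

Definition is_z z (t : X * Y * Z) : bool := t.2 == z.
Definition is_xz x z (t : X * Y * Z) : bool := (t.1.1 == x) && (t.2 == z).
Definition is_y y (t : X * Y * Z) : bool := t.1.2 == y.

Lemma sum_triple (F : X * Y * Z -> R) :
  \sum_t F t = \sum_x \sum_y \sum_z F (x, y, z).
Proof.
rewrite [RHS]pair_big /= [RHS]pair_big /=.
by apply: eq_bigr => [[[x y] z]] _.
Qed.

Lemma prob_cond_z P z : \sum_t P t = 1 -> prob_cond P xpredT (is_z z) = PZ P z.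
Proof.
move=> P_sum1; rewrite /prob_cond P_sum1 divr1 big_mkcond sum_triple /PZ.
by apply: eq_bigr => x _; apply: eq_bigr => y _; rewrite -big_mkcond big_pred1_eq.
Qed.

Lemma prob_cond_xz_y P x y z : prob_cond P (is_xz x z) (is_y y) = cond_y_xz P y x z.
Proof.
have num : \sum_(t | is_xz x z t && is_y y t) P t = P (x, y, z).
  rewrite (eq_bigl (pred1 (x, y, z))) ?big_pred1_eq // => -[[x' y'] z'] /=.
  by rewrite /is_xz /is_y !xpair_eqE /= andbAC.
have den : \sum_(t | is_xz x z t) P t = PXZ P x z.
  rewrite big_mkcond sum_triple /PXZ (bigD1 x) //= [e in _ + e]big1 ?addr0.
    by apply: eq_bigr => y' _; rewrite /is_xz /= eqxx -big_mkcond big_pred1_eq.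
  move=> x' /negbTE x'x; apply: big1 => y' _; apply: big1 => z' _.
  by rewrite /is_xz /= x'x.
by rewrite /prob_cond num den.
Qed.

Variable N : nat.
Implicit Types (s : sample X Y Z N).

Lemma count_inT s : count_in xpredT s = N.
Proof. by rewrite -[RHS]card_ord; apply: eq_card => n; rewrite inE. Qed.

Lemma freq_cond_z s z : freq_cond R xpredT (is_z z) s = phat_z R s z.
Proof. by rewrite /freq_cond count_inT. Qed.

Lemma freq_cond_xz_y s x y z :
  freq_cond R (is_xz x z) (is_y y) s = phat_y_xz R s y x z.
Proof.
rewrite /freq_cond /phat_y_xz; congr (_%:R / _).
apply: eq_card => n; rewrite !inE /is_xz /is_y.
by case: ((s n).1.1 == x); case: ((s n).1.2 == y); case: ((s n).2 == z).
Qed.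

Lemma in_CI_of_freq_close P xt y delta s :
  (forall t, 0 <= P t) -> \sum_t P t = 1 -> (0 < N)%N ->
  (forall z, ~~ freq_dev P (ln (4 * #|Z|%:R / delta)) xpredT (is_z z) s &&
             ~~ freq_dev P (ln (4 * #|Z|%:R / delta)) (is_xz xt z) (is_y y) s) ->
  in_CI P xt y delta s.
Proof.
move=> P_ge0 P_sum1 N_gt0 close; apply/implyP => /forallP cnt_gt0.
rewrite -ler_distlC /mhat /do_param /hwidth /=.
apply: dist_sum_mul_le => z; have /andP[close_z close_xz] := close z.
- rewrite -freq_cond_xz_y -prob_cond_xz_y.
  exact: dist_freq_cond_le (cnt_gt0 z) close_xz.
- rewrite -freq_cond_z -(prob_cond_z z P_sum1) -[in 2 * N%:R](count_inT s).
  by apply: dist_freq_cond_le; rewrite ?count_inT.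
- by rewrite -freq_cond_z freq_cond_ge0 freq_cond_le1.
- by rewrite -prob_cond_xz_y prob_cond_ge0 ?prob_cond_le1.
Qed.

End Backdoor.

Theorem theorem1 (R : realType) (X Y Z : finType)
  (HX : (0 < #|X|)%N) (HY : (0 < #|Y|)%N) (HZ : (0 < #|Z|)%N)
  (P : X * Y * Z -> R)
  (Ppos : forall t, 0 < P t) (Psum : \sum_(t : X * Y * Z) P t = 1)
  (N : nat) (HN : (1 <= N)%N)
  (delta : R) (Hdelta : 0 < delta) (xt : X) (y : Y) :
  Prob P (@in_CI R X Y Z P N xt y delta) >= 1 - delta.
Proof.
have P_ge0 t : 0 <= P t := ltW (Ppos t).
have [delta_ge1|delta_lt1] := leP 1 delta.
  by apply: le_trans (Prob_ge0 P_ge0 _); rewrite subr_le0.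
set K : R := #|Z|%:R; set L := ln (4 * K / delta).
have K_ge1 : 1 <= K by rewrite ler1n.
have L_ge0 : 0 <= L by rewrite ln_ge0 // ler_pdivlMr // mul1r; lra.
have expNL : expR (- L) = delta / (4 * K).
  by rewrite expRN lnK ?invf_div // posrE divr_gt0 //; lra.
pose bad (z : Z) (s : sample X Y Z N) :=
  freq_dev P L xpredT (is_z z) s || freq_dev P L (is_xz xt z) (is_y y) s.
have bad_le z : Prob P (bad z) <= 4 * expR (- L).
  apply: le_trans (Prob_or P_ge0 _ _) _.
  have -> : 4 * expR (- L) = 2 * expR (- L) + 2 * expR (- L) by ring.
  apply: lerD; apply: Prob_freq_dev_le => //; first by rewrite Psum.
  by rewrite (bigD1 (xt, y, z)) /is_xz ?eqxx //= ltr_pwDl ?sumr_ge0.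
have not_CI_bad s : ~~ in_CI P xt y delta s -> [exists z, bad z s].
  apply: contraR; rewrite negb_exists => /forallP no_bad.
  by apply: in_CI_of_freq_close => // z; rewrite -negb_or no_bad.
suff : Prob P (predC (in_CI (N := N) P xt y delta)) <= delta.
  by rewrite Prob_predC //; lra.
apply: le_trans (le_Prob P_ge0 not_CI_bad) _; apply: le_trans (Prob_exists P_ge0 bad) _.
apply: le_trans (ler_sum _ (fun z _ => bad_le z)) _.
rewrite sumr_const -mulr_natr -/K expNL le_eqVlt; apply/orP; left; apply/eqP.
by field; lra.
Qed.
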